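(* Assume (A1)–(A4) and $\eta_x,\eta_z>0$ (see context). Then the iterates of the Jacobi scheme satisfy, for all $k\ge1$, $$\Phi^{k-1}\ge\Phi^k\ge\hat\Phi.$$
   Context: Let $T\ge1$, $[T]=\{1,\dots,T\}$; for $t\in[T]$: $X_t\subseteq\mathbb{R}^{n_t}$, $f_t:\mathbb{R}^{n_t}\to\mathbb{R}$, $A_t\in\mathbb{R}^{m\times n_t}$; $b\in\mathbb{R}^m$; $X=\prod_tX_t$, $A=[A_1\cdots A_T]$, $Ax=\sum_tA_tx_t$, $A_{\neq t}x_{\neq t}=\sum_{s\neq t}A_sx_s$; $\|w\|_M=\sqrt{w^\top Mw}$. Assumptions: (A1) $X_t$ nonempty compact; (A2) $f_t$ is $C^2$; (A3) $A$ full row rank; (A4) $\{x\in X:Ax=b\}\neq\emptyset$. Parameters $\rho,\theta,\tau_x,\tau_z>0$ with $\eta_x:=\frac{\tau_x}{4}-\frac{(T-1)\rho}{2}>0$, $\eta_z:=\frac{\tau_z}{4}-\frac{2(\theta+\tau_z)^2}{\rho}>0$. $\mathcal{L}(x,z,\lambda)=\sum_tf_t(x_t)+\frac{\theta}{2}\|z\|^2+\lambda^\top(Ax+z-b)+\frac{\rho}{2}\|Ax+z-b\|^2$. Jacobi scheme: given $x^0\in X$, $z^0,\lambda^0\in\mathbb{R}^m$, for $k\ge1$: (i) for each $t$, $x_t^k$ is a local minimizer, computed by a solver warm-started at $x_t^{k-1}$ (so that its subproblem objective does not exceed that of $x_t^{k-1}$), of $\min_{x_t\in X_t}f_t(x_t)+(\lambda^{k-1})^\top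 A_tx_t+\frac{\rho}{2}\|A_tx_t+A_{\neq t}x^{k-1}_{\neq t}+z^{k-1}-b\|^2+\frac{\tau_x}{2}\|x_t-x_t^{k-1}\|^2_{A_t^\top A_t}$; (ii) $z^k=(\tau_zz^{k-1}-\rho(Ax^k-b)-\lambda^{k-1})/(\tau_z+\rho+\theta)$; (iii) $\lambda^k=\lambda^{k-1}+\rho(Ax^k+z^k-b)$. $\Phi(x,z,\lambda,\hat x,\hat z)=\mathcal{L}(x,z,\lambda)+\frac{\tau_z}{4}\|z-\hat z\|^2+\sum_t\frac{\tau_x}{4}\|x_t-\hat x_t\|^2_{A_t^\top A_t}$; $\Phi^k=\Phi(x^k,z^k,\lambda^k,x^{k-1},z^{k-1})$ for $k\ge1$; $\Delta z^0=-\tau_z^{-1}(\lambda^0+\theta z^0)$, $\Phi^0=\mathcal{L}(x^0,z^0,\lambda^0)+\frac{\tau_z}{4}\|\Delta z^0\|^2$; $\hat\Phi=\min_{x\in X}\sum_tf_t(x_t)$. *)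

From HB Require Import structures.
From mathcomp Require Import all_boot all_order all_algebra.
From mathcomp Require Import all_classical all_reals all_analysis.
Set Implicit Arguments. Unset Strict Implicit. Unset Printing Implicit Defensive.
Import Order.TTheory GRing.Theory Num.Theory.
Import numFieldNormedType.Exports.
Local Open Scope classical_set_scope.
Local Open Scope ring_scope.

Definition inner (R : realType) (m : nat) (u v : 'cV[R]_m) : R := (u^T *m v) 0 0.
Definition norm2 (R : realType) (m : nat) (u : 'cV[R]_m) : R := inner u u.
Definition wnorm2 (R : realType) (m : nat) (M : 'M[R]_m) (w : 'cV[R]_m) : R :=
  (w^T *m M *m w) 0 0.

Definition ebasis (R : realType) (n : nat) (i : 'I_n) : 'cV[R]_n := delta_mx i 0.

Definition C2 (R : realType) (n : nat) (f : 'cV[R]_n -> R) : Prop :=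
  continuous f /\
  forall i j : 'I_n,
    (forall x, derivable f x (ebasis R i)) /\
    continuous ('D_(ebasis R i) f) /\
    (forall x, derivable ('D_(ebasis R i) f) x (ebasis R j)) /\
    continuous ('D_(ebasis R j) ('D_(ebasis R i) f)).

Definition Amul (R : realType) (T m : nat) (n : 'I_T -> nat)
  (A : forall t : 'I_T, 'M[R]_(m, n t)) (x : forall t : 'I_T, 'cV[R]_(n t)) : 'cV[R]_m :=
  \sum_(t < T) A t *m x t.

Definition Amul_neq (R : realType) (T m : nat) (n : 'I_T -> nat)
  (A : forall t : 'I_T, 'M[R]_(m, n t)) (x : forall t : 'I_T, 'cV[R]_(n t)) (t : 'I_T)
  : 'cV[R]_m :=
  \sum_(s < T | s != t) A s *m x s.

Definition AugL (R : realType) (T m : nat) (n : 'I_T -> nat)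
  (f : forall t : 'I_T, 'cV[R]_(n t) -> R) (A : forall t : 'I_T, 'M[R]_(m, n t))
  (b : 'cV[R]_m) (rho theta : R)
  (x : forall t : 'I_T, 'cV[R]_(n t)) (z lam : 'cV[R]_m) : R :=
  \sum_(t < T) f t (x t) + theta / 2 * norm2 z
  + inner lam (Amul A x + z - b) + rho / 2 * norm2 (Amul A x + z - b).

Definition Phi (R : realType) (T m : nat) (n : 'I_T -> nat)
  (f : forall t : 'I_T, 'cV[R]_(n t) -> R) (A : forall t : 'I_T, 'M[R]_(m, n t))
  (b : 'cV[R]_m) (rho theta tau_x tau_z : R)
  (x : forall t : 'I_T, 'cV[R]_(n t)) (z lam : 'cV[R]_m)
  (xh : forall t : 'I_T, 'cV[R]_(n t)) (zh : 'cV[R]_m) : R :=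
  AugL f A b rho theta x z lam + tau_z / 4 * norm2 (z - zh)
  + \sum_(t < T) tau_x / 4 * wnorm2 ((A t)^T *m A t) (x t - xh t).

(* Phi^k along the iterate sequences (x^k, z^k, lam^k); Phi^0 uses Delta z^0 *)
Definition PhiSeq (R : realType) (T m : nat) (n : 'I_T -> nat)
  (f : forall t : 'I_T, 'cV[R]_(n t) -> R) (A : forall t : 'I_T, 'M[R]_(m, n t))
  (b : 'cV[R]_m) (rho theta tau_x tau_z : R)
  (x : nat -> forall t : 'I_T, 'cV[R]_(n t)) (z lam : nat -> 'cV[R]_m) (k : nat) : R :=
  match k with
  | k'.+1 => Phi f A b rho theta tau_x tau_z (x k) (z k) (lam k) (x k') (z k')
  | 0%N => AugL f A b rho theta (x 0%N) (z 0%N) (lam 0%N)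
           + tau_z / 4 * norm2 (- tau_z^-1 *: (lam 0%N + theta *: z 0%N))
  end.

(* Phihat = min_{x in X} sum_t f_t(x_t)  (taken as the infimum, which is
   attained under (A1)-(A2)) *)
Definition Phihat (R : realType) (T : nat) (n : 'I_T -> nat)
  (X : forall t : 'I_T, set 'cV[R]_(n t))
  (f : forall t : 'I_T, 'cV[R]_(n t) -> R) : R :=
  inf [set \sum_(t < T) f t (x t) |
       x in [set x : forall t : 'I_T, 'cV[R]_(n t) | forall t, X t (x t)]].

(* objective of the t-th x-subproblem at iteration k (built from iterate k-1) *)
Definition subobj (R : realType) (T m : nat) (n : 'I_T -> nat)
  (f : forall t : 'I_T, 'cV[R]_(n t) -> R) (A : forall t : 'I_T, 'M[R]_(m, n t))
  (b : 'cV[R]_m) (rho tau_x : R)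
  (xp : forall t : 'I_T, 'cV[R]_(n t)) (zp lamp : 'cV[R]_m) (t : 'I_T)
  (y : 'cV[R]_(n t)) : R :=
  f t y + inner lamp (A t *m y)
  + rho / 2 * norm2 (A t *m y + Amul_neq A xp t + zp - b)
  + tau_x / 2 * wnorm2 ((A t)^T *m A t) (y - xp t).

From HB Require Import structures.
From mathcomp Require Import all_boot all_order all_algebra.
From mathcomp Require Import all_classical all_reals all_analysis.
From mathcomp Require Import lra ring.
Import Order.TTheory GRing.Theory Num.Theory.
Import numFieldNormedType.Exports.
Local Open Scope classical_set_scope.
Local Open Scope ring_scope.
Set Implicit Arguments. Unset Strict Implicit. Unset Printing Implicit Defensive.

(* Write L for the augmented Lagrangian and r^k = A x^k + z^k - b.  A Jacobi
   sweep changes L in three stages.  Summing the warm-start descents of the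
   blocks and using |sum_t d_t|^2 <= T sum_t |d_t|^2, the x-update decreases L
   by at least (tau_x - (T-1) rho)/2 sum_t |A_t (x_t^k - x_t^(k-1))|^2.  The
   z-update minimises a quadratic with curvature theta + rho + tau_z, so it
   decreases L by (theta + rho + 2 tau_z)/2 |Dz^k|^2.  The multiplier update
   increases L by rho |r^k|^2 = |lam^k - lam^(k-1)|^2 / rho.  Stationarity of
   the z-update gives lam^k = - theta z^k - tau_z Dz^k, so lam^k - lam^(k-1) is
   a combination of Dz^k and Dz^(k-1), and eta_z > 0 bounds the increase by
   tau_z/4 (|Dz^k|^2 + |Dz^(k-1)|^2), which the proximal terms of Phi absorb.
   The same expression of lam^k makes Phi^k - sum_t f_t(x_t^k) nonnegative,
   and f is bounded below on the compact set X. *)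

Section InnerProduct.
Variables (R : realType) (m : nat).
Implicit Types (u v w : 'cV[R]_m).

Lemma innerE u v : inner u v = \sum_i u i 0 * v i 0.
Proof. by rewrite /inner !mxE; apply: eq_bigr => i _; rewrite mxE. Qed.

Lemma innerC u v : inner u v = inner v u.
Proof. by rewrite !innerE; apply: eq_bigr => i _; rewrite mulrC. Qed.

Lemma innerDl u v w : inner (u + v) w = inner u w + inner v w.
Proof. by rewrite !innerE -big_split; apply: eq_bigr => i _; rewrite mxE mulrDl. Qed.

Lemma innerZl (c : R) u v : inner (c *: u) v = c * inner u v.
Proof. by rewrite !innerE mulr_sumr; apply: eq_bigr => i _; rewrite mxE mulrA. Qed.

Lemma innerBl u v w : inner (u - v) w = inner u w - inner v w.
Proof. by rewrite innerDl -scaleN1r innerZl mulN1r. Qed.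

Lemma innerDr u v w : inner u (v + w) = inner u v + inner u w.
Proof. by rewrite innerC innerDl !(innerC u). Qed.

Lemma innerZr (c : R) u v : inner u (c *: v) = c * inner u v.
Proof. by rewrite innerC innerZl innerC. Qed.

Lemma innerBr u v w : inner u (v - w) = inner u v - inner u w.
Proof. by rewrite !(innerC u) innerBl. Qed.

Lemma inner0l u : inner 0 u = 0.
Proof. by rewrite innerE big1 // => i _; rewrite mxE mul0r. Qed.

Lemma inner_sumr (I : finType) (d : I -> 'cV[R]_m) u :
  inner u (\sum_i d i) = \sum_i inner u (d i).
Proof.
rewrite innerE; under eq_bigr => j _ do rewrite summxE mulr_sumr.
by rewrite exchange_big; apply: eq_bigr => i _; rewrite innerE.
Qed.

Lemma norm2_ge0 u : 0 <= norm2 u.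
Proof. by rewrite /norm2 innerE sumr_ge0 // => i _; rewrite -expr2 sqr_ge0. Qed.

Lemma norm2D u v : norm2 (u + v) = norm2 u + 2 * inner u v + norm2 v.
Proof. by rewrite /norm2 !innerDl !innerDr (innerC v u); ring. Qed.

Lemma norm2Z (c : R) u : norm2 (c *: u) = c ^+ 2 * norm2 u.
Proof. by rewrite /norm2 innerZl innerZr mulrA expr2. Qed.

Lemma norm2D_le u v : norm2 (u + v) <= 2 * norm2 u + 2 * norm2 v.
Proof.
have := norm2_ge0 (u - v).
by rewrite /norm2 !innerBl !innerBr !innerDl !innerDr (innerC v u); lra.
Qed.

Lemma norm2_sum_le (I : finType) (d : I -> 'cV[R]_m) :
  norm2 (\sum_i d i) <= #|I|%:R * \sum_i norm2 (d i).
Proof.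
set N := \sum_i norm2 (d i).
have pairwise_ge0 : 0 <= \sum_i \sum_j norm2 (d i - d j).
  by do 2![apply: sumr_ge0 => ? _]; exact: norm2_ge0.
have normE : norm2 (\sum_i d i) = \sum_i \sum_j inner (d i) (d j).
  rewrite {1}/norm2 inner_sumr.
  by apply: eq_bigr => i _; rewrite innerC inner_sumr.
have pairwiseE : \sum_i \sum_j norm2 (d i - d j)
    = #|I|%:R * N + #|I|%:R * N - 2 * norm2 (\sum_i d i).
  have expand i j : norm2 (d i - d j)
      = norm2 (d i) + norm2 (d j) - 2 * inner (d i) (d j).
    by rewrite /norm2 !innerBl !innerBr (innerC (d j)); ring.
  transitivity (\sum_i (#|I|%:R * norm2 (d i) + N - 2 * \sum_j inner (d i) (d j))).
    apply: eq_bigr => i _; rewrite (eq_bigr _ (fun j _ => expand i j)).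
    by rewrite sumrB big_split /= sumr_const -mulr_sumr -[norm2 _ *+ _]mulr_natr mulrC.
  by rewrite normE sumrB big_split /= sumr_const -!mulr_sumr -[N *+ _]mulr_natr mulrC.
by rewrite pairwiseE in pairwise_ge0; lra.
Qed.

Lemma wnorm2_mulTmx k (M : 'M[R]_(m, k)) (w : 'cV[R]_k) :
  wnorm2 (M^T *m M) w = norm2 (M *m w).
Proof. by rewrite /wnorm2 /norm2 /inner trmx_mul !mulmxA. Qed.

End InnerProduct.

Definition residual (R : realType) (T m : nat) (n : 'I_T -> nat)
  (A : forall t : 'I_T, 'M[R]_(m, n t)) (b : 'cV[R]_m)
  (x : forall t : 'I_T, 'cV[R]_(n t)) (z : 'cV[R]_m) : 'cV[R]_m :=
  Amul A x + z - b.

Definition Adist2 (R : realType) (T m : nat) (n : 'I_T -> nat)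
  (A : forall t : 'I_T, 'M[R]_(m, n t)) (x xp : forall t : 'I_T, 'cV[R]_(n t)) : R :=
  \sum_(t < T) norm2 (A t *m (x t - xp t)).

Section AugmentedLagrangian.
Variables (R : realType) (T m : nat) (n : 'I_T -> nat).
Variables (f : forall t : 'I_T, 'cV[R]_(n t) -> R) (A : forall t : 'I_T, 'M[R]_(m, n t)).
Arguments f : clear implicits.
Variables (b : 'cV[R]_m) (rho theta tau_x : R).
Implicit Types (x xp : forall t : 'I_T, 'cV[R]_(n t)) (z zp lam : 'cV[R]_m).

Local Notation L := (AugL f A b rho theta).
Local Notation r := (residual A b).

Lemma AugLE x z lam :
  L x z lam = \sum_(t < T) f t (x t) + theta / 2 * norm2 z + inner lam (r x z)
              + rho / 2 * norm2 (r x z).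
Proof. by []. Qed.

Lemma Amul_split x t : Amul A x = A t *m x t + Amul_neq A x t.
Proof. exact: bigD1. Qed.

Lemma AmulB x xp : Amul A x - Amul A xp = \sum_(t < T) A t *m (x t - xp t).
Proof. by rewrite -sumrB; apply: eq_bigr => t _; rewrite mulmxBr. Qed.

Lemma residualDz x z (e : 'cV[R]_m) : r x (z + e) = r x z + e.
Proof. by rewrite /residual addrA [RHS]addrAC. Qed.

Lemma residual_shift_x x xp z : r x z = r xp z + (Amul A x - Amul A xp).
Proof. by apply/matrixP => i j; rewrite /residual !mxE; ring. Qed.

Lemma Adist2_ge0 x xp : 0 <= Adist2 A x xp.
Proof. by apply: sumr_ge0 => t _; exact: norm2_ge0. Qed.

Lemma AugL_lam_step x z lam :
  L x z (lam + rho *: r x z) = L x z lam + rho * norm2 (r x z).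
Proof. by rewrite !AugLE innerDl innerZl /norm2; ring. Qed.

Lemma AugL_z_step (tau_z : R) x zp e lam :
  theta *: (zp + e) + lam + rho *: r x (zp + e) + tau_z *: e = 0 ->
  L x (zp + e) lam = L x zp lam - (theta + rho + 2 * tau_z) / 2 * norm2 e.
Proof.
move=> /(congr1 ((@inner R m)^~ e)); rewrite residualDz !innerDl !innerZl.
rewrite (innerDl (r x zp)) inner0l => stationary.
rewrite !AugLE residualDz norm2D (norm2D (r x zp)) innerDr.
by move: stationary; rewrite /norm2 innerDl; lra.
Qed.

Lemma subobj_sub xp z lam t y (d := A t *m (y - xp t)) :
  subobj f A b rho tau_x xp z lam y - subobj f A b rho tau_x xp z lam (xp t)
  = f t y - f t (xp t) + inner lam d + rho * inner (r xp z) d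
    + (rho + tau_x) / 2 * norm2 d.
Proof.
have old : A t *m xp t + Amul_neq A xp t + z - b = r xp z.
  by rewrite /residual (Amul_split xp t).
have new : A t *m y + Amul_neq A xp t + z - b = r xp z + d.
  by rewrite -old /d mulmxBr; apply/matrixP => i j; rewrite !mxE; ring.
rewrite /subobj new old subrr !wnorm2_mulTmx mulmx0 norm2D /d mulmxBr !innerBr.
by rewrite /norm2 inner0l; lra.
Qed.

Lemma AugL_x_step xp x z lam :
  0 <= rho ->
  (forall t, subobj f A b rho tau_x xp z lam (x t)
             <= subobj f A b rho tau_x xp z lam (xp t)) ->
  L x z lam + (tau_x - (T%:R - 1) * rho) / 2 * Adist2 A x xp <= L xp z lam.
Proof.
move=> rho_ge0 descent; set D := Amul A x - Amul A xp; set S := Adist2 A x xp.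
have blocks : \sum_(t < T) f t (x t) - \sum_(t < T) f t (xp t) + inner lam D
              + rho * inner (r xp z) D + (rho + tau_x) / 2 * S <= 0.
  have : \sum_(t < T) (subobj f A b rho tau_x xp z lam (x t)
                       - subobj f A b rho tau_x xp z lam (xp t)) <= 0.
    by apply: sumr_le0 => t _; rewrite subr_le0.
  under eq_bigr => t _ do rewrite subobj_sub.
  by rewrite !big_split /= sumrN /D AmulB !inner_sumr -!mulr_sumr.
have D_le : rho / 2 * norm2 D <= rho / 2 * (T%:R * S).
  apply: ler_wpM2l; first lra.
  by rewrite /D AmulB; have := norm2_sum_le (fun t => A t *m (x t - xp t)); rewrite card_ord.
by rewrite !AugLE (residual_shift_x x xp z) -/D norm2D innerDr; lra.
Qed.

End AugmentedLagrangian.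

Section MultiplierEstimates.
Variables (R : realType) (m : nat) (rho theta tau_z : R).
Implicit Types (a b z zp lp lam r e g : 'cV[R]_m).

Lemma z_update_stationary a b zp lp z :
  tau_z + rho + theta != 0 ->
  z = (tau_z + rho + theta)^-1 *: (tau_z *: zp - rho *: (a - b) - lp) ->
  theta *: z + lp + rho *: (a + z - b) + tau_z *: (z - zp) = 0.
Proof.
by move=> nz0 ->; apply/matrixP => i j; rewrite !mxE; field.
Qed.

Lemma stationary_multiplier z zp lp r lam :
  theta *: z + lp + rho *: r + tau_z *: (z - zp) = 0 ->
  lam = lp + rho *: r ->
  lam = - (theta *: z) - tau_z *: (z - zp).
Proof.
move=> /matrixP stationary ->; apply/matrixP => i j.
by move: (stationary i j); rewrite !mxE => ?; lra.
Qed.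

Lemma eta_z_gt0E :
  0 < rho ->
  (0 < tau_z / 4 - 2 * (theta + tau_z) ^+ 2 / rho)
  = (8 * (theta + tau_z) ^+ 2 < rho * tau_z).
Proof.
move=> rho_gt0; have scaled : rho * (tau_z / 4 - 2 * (theta + tau_z) ^+ 2 / rho)
                                = (rho * tau_z - 8 * (theta + tau_z) ^+ 2) / 4.
  by field; exact: lt0r_neq0.
by rewrite -(pmulr_rgt0 _ rho_gt0) scaled pmulr_lgt0 // subr_gt0.
Qed.

Lemma multiplier_bound r e g :
  0 < rho -> 0 <= theta -> 0 <= tau_z ->
  0 < tau_z / 4 - 2 * (theta + tau_z) ^+ 2 / rho ->
  rho *: r = tau_z *: g - (theta + tau_z) *: e ->
  rho * norm2 r <= tau_z / 4 * (norm2 e + norm2 g).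
Proof.
move=> rho_gt0 theta_ge0 tau_z_ge0; rewrite eta_z_gt0E // => eta_z rhor.
have sq_le : tau_z ^+ 2 <= (theta + tau_z) ^+ 2 by rewrite ler_sqr ?nnegrE; lra.
have rho2_le : rho ^+ 2 * norm2 r <= 2 * (theta + tau_z) ^+ 2 * (norm2 e + norm2 g).
  rewrite -norm2Z rhor; have := norm2D_le (tau_z *: g) (- ((theta + tau_z) *: e)).
  rewrite -scaleNr !norm2Z sqrrN => h.
  have := ler_wpM2r (norm2_ge0 g) sq_le; lra.
rewrite -(ler_pM2l rho_gt0) mulrA -expr2 (le_trans rho2_le) // [leRHS]mulrA.
by rewrite ler_wpM2r ?addr_ge0 ?norm2_ge0 //; lra.
Qed.

Lemma eta_z_rho_bounds :
  0 < rho -> 0 < theta -> 0 < tau_z ->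
  0 < tau_z / 4 - 2 * (theta + tau_z) ^+ 2 / rho ->
  2 * theta <= rho /\ 4 * tau_z <= rho.
Proof.
move=> rho_gt0 theta_gt0 tau_z_gt0; rewrite eta_z_gt0E // => eta_z.
have : 8 * (theta + tau_z) < rho.
  rewrite -(ltr_pM2r tau_z_gt0); apply: le_lt_trans eta_z.
  by rewrite expr2 mulrA ler_wpM2l ?mulr_ge0 //; lra.
by split; lra.
Qed.

Lemma dual_penalty_ge0 z e lam r :
  0 < rho -> 0 <= theta -> 0 <= tau_z -> 2 * theta <= rho -> 4 * tau_z <= rho ->
  lam = - (theta *: z) - tau_z *: e ->
  0 <= theta / 2 * norm2 z + inner lam r + rho / 2 * norm2 r + tau_z / 4 * norm2 e.
Proof.
move=> rho_gt0 theta_ge0 tau_z_ge0 theta_le tau_z_le lamE.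
have square : 0 <= rho ^+ 2 * norm2 r + 2 * (rho * inner lam r) + norm2 lam.
  by have := norm2_ge0 (rho *: r + lam); rewrite norm2D norm2Z innerZl innerC.
have lam_le : norm2 lam <= 2 * theta ^+ 2 * norm2 z + 2 * tau_z ^+ 2 * norm2 e.
  have := norm2D_le (- (theta *: z)) (- (tau_z *: e)).
  by rewrite -lamE -!scaleNr !norm2Z !sqrrN !mulrA.
have z_part : 0 <= theta * (rho - 2 * theta) * norm2 z.
  by rewrite !mulr_ge0 ?norm2_ge0 ?subr_ge0.
have e_part : 0 <= tau_z * (rho / 2 - 2 * tau_z) * norm2 e.
  by rewrite !mulr_ge0 ?norm2_ge0 // subr_ge0; lra.
by rewrite -(pmulr_rge0 _ rho_gt0); rewrite !expr2 in square lam_le; lra.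
Qed.

End MultiplierEstimates.

(* Dz 0 is chosen so that lamE also holds at k = 0. *)
Definition Dz (R : realType) (m : nat) (theta tau_z : R) (z lam : nat -> 'cV[R]_m)
  (k : nat) : 'cV[R]_m :=
  if k is k'.+1 then z k'.+1 - z k' else - tau_z^-1 *: (lam 0%N + theta *: z 0%N).

Section JacobiIterates.
Variables (R : realType) (T m : nat) (n : 'I_T -> nat).
Variables (f : forall t : 'I_T, 'cV[R]_(n t) -> R) (A : forall t : 'I_T, 'M[R]_(m, n t)).
Arguments f : clear implicits.
Variables (b : 'cV[R]_m) (rho theta tau_x tau_z : R).
Hypotheses (rho_gt0 : 0 < rho) (theta_gt0 : 0 < theta).
Hypotheses (tau_x_gt0 : 0 < tau_x) (tau_z_gt0 : 0 < tau_z).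
Hypothesis eta_x_gt0 : 0 < tau_x / 4 - (T%:R - 1) * rho / 2.
Hypothesis eta_z_gt0 : 0 < tau_z / 4 - 2 * (theta + tau_z) ^+ 2 / rho.

Variables (x : nat -> forall t : 'I_T, 'cV[R]_(n t)) (z lam : nat -> 'cV[R]_m).
Hypothesis x_step : forall k t,
  subobj f A b rho tau_x (x k) (z k) (lam k) (x k.+1 t)
  <= subobj f A b rho tau_x (x k) (z k) (lam k) (x k t).
Hypothesis z_step : forall k,
  z k.+1 = (tau_z + rho + theta)^-1 *:
             (tau_z *: z k - rho *: (Amul A (x k.+1) - b) - lam k).
Hypothesis lam_step : forall k,
  lam k.+1 = lam k + rho *: residual A b (x k.+1) (z k.+1).

Local Notation L := (AugL f A b rho theta).
Local Notation Phi_ := (PhiSeq f A b rho theta tau_x tau_z x z lam).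
Local Notation Dz := (Dz theta tau_z z lam).

Lemma z_stationary k :
  theta *: z k.+1 + lam k + rho *: residual A b (x k.+1) (z k.+1)
  + tau_z *: (z k.+1 - z k) = 0.
Proof. by apply: z_update_stationary (z_step k); rewrite lt0r_neq0 ?addr_gt0. Qed.

Lemma lamE k : lam k = - (theta *: z k) - tau_z *: Dz k.
Proof.
case: k => [|k]; last exact: stationary_multiplier (z_stationary k) (lam_step k).
by apply/matrixP => i j; rewrite /Dz !mxE; field; exact: lt0r_neq0.
Qed.

Lemma lam_increment k :
  rho *: residual A b (x k.+1) (z k.+1) = tau_z *: Dz k - (theta + tau_z) *: Dz k.+1.
Proof.
have := lam_step k; rewrite !lamE /= => /matrixP step.
by apply/matrixP => i j; move: (step i j); rewrite !mxE => ?; lra.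
Qed.

Lemma PhiSeqS k :
  Phi_ k.+1 = L (x k.+1) (z k.+1) (lam k.+1) + tau_z / 4 * norm2 (Dz k.+1)
              + tau_x / 4 * Adist2 A (x k.+1) (x k).
Proof.
by rewrite /= /Phi /Adist2 mulr_sumr; congr (_ + _); apply: eq_bigr => t _;
  rewrite wnorm2_mulTmx.
Qed.

Lemma PhiSeq_ge k : L (x k) (z k) (lam k) + tau_z / 4 * norm2 (Dz k) <= Phi_ k.
Proof.
case: k => [//|k]; rewrite PhiSeqS lerDl.
by rewrite mulr_ge0 ?Adist2_ge0 ?divr_ge0 ?ltW.
Qed.

Lemma PhiSeq_nonincreasing k : Phi_ k.+1 <= Phi_ k.
Proof.
have zS : z k.+1 = z k + Dz k.+1 by rewrite /= addrC subrK.
have x_descent := AugL_x_step theta (ltW rho_gt0) (x_step k).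
have z_descent : L (x k.+1) (z k.+1) (lam k) = L (x k.+1) (z k) (lam k)
                 - (theta + rho + 2 * tau_z) / 2 * norm2 (Dz k.+1).
  by rewrite zS; apply: AugL_z_step; rewrite -zS z_stationary.
have lam_ascent : L (x k.+1) (z k.+1) (lam k.+1) = L (x k.+1) (z k.+1) (lam k)
                  + rho * norm2 (residual A b (x k.+1) (z k.+1)).
  by rewrite lam_step AugL_lam_step.
have lam_le := multiplier_bound rho_gt0 (ltW theta_gt0) (ltW tau_z_gt0) eta_z_gt0
                 (lam_increment k).
have eta_x_S : 0 <= (tau_x / 4 - (T%:R - 1) * rho / 2) * Adist2 A (x k.+1) (x k).
  by rewrite mulr_ge0 ?Adist2_ge0 ?ltW.
have e_ge0 : 0 <= (theta + rho + tau_z) * norm2 (Dz k.+1).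
  by rewrite mulr_ge0 ?norm2_ge0 ?addr_ge0 ?ltW.
have := PhiSeq_ge k; rewrite PhiSeqS; lra.
Qed.

Lemma sum_f_le_PhiSeq k : \sum_(t < T) f t (x k t) <= Phi_ k.
Proof.
apply: le_trans (PhiSeq_ge k); rewrite AugLE -!addrA lerDl !addrA.
have [theta_le tau_z_le] := eta_z_rho_bounds rho_gt0 theta_gt0 tau_z_gt0 eta_z_gt0.
exact: dual_penalty_ge0 (ltW theta_gt0) (ltW tau_z_gt0) theta_le tau_z_le (lamE k).
Qed.

End JacobiIterates.

Lemma compact_continuous_lbound (R : realType) (k : nat) (K : set 'cV[R]_k)
  (g : 'cV[R]_k -> R) :
  compact K -> continuous g -> exists M, forall y, K y -> - M <= g y.
Proof.
move=> K_compact g_cont.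
have gK_compact : compact (g @` K).
  by apply: continuous_compact => //; exact: continuous_subspaceT.
have [M [_ M_bound]] := compact_bounded gK_compact.
exists (M + 1) => y Ky.
have : `|g y| <= M + 1 by apply: (M_bound (M + 1)); [rewrite ltrDl | exists y].
by rewrite ler_norml => /andP[].
Qed.

Lemma Phihat_le (R : realType) (T : nat) (n : 'I_T -> nat)
  (X : forall t : 'I_T, set 'cV[R]_(n t))
  (f : forall t : 'I_T, 'cV[R]_(n t) -> R) (y : forall t, 'cV[R]_(n t)) :
  (forall t, compact (X t)) -> (forall t, continuous (f t)) ->
  (forall t, X t (y t)) -> Phihat X f <= \sum_t f t (y t).
Proof.
move=> X_compact f_cont Xy.
have /choice [M M_bound] : forall t, exists M, forall v, X t v -> - M <= f t v.
  by move=> t; exact: compact_continuous_lbound.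
apply: ge_inf; last by exists y.
exists (\sum_t - M t) => _ [w Xw <-].
by apply: ler_sum => t _; exact/M_bound/Xw.
Qed.

Theorem lemma3 (R : realType) (T m : nat) (n : 'I_T -> nat)
  (X : forall t : 'I_T, set 'cV[R]_(n t))
  (f : forall t : 'I_T, 'cV[R]_(n t) -> R)
  (A : forall t : 'I_T, 'M[R]_(m, n t)) (b : 'cV[R]_m)
  (rho theta tau_x tau_z : R)
  (x : nat -> forall t : 'I_T, 'cV[R]_(n t)) (z lam : nat -> 'cV[R]_m) :
  (0 < T)%N ->
  (* (A1) *)
  (forall t, X t !=set0 /\ compact (X t)) ->
  (* (A2) *)
  (forall t, C2 (f t)) ->
  (* (A3) *)
  row_free (\mxrow_(t < T) A t) ->
  (* (A4) *)
  (exists x0 : forall t : 'I_T, 'cV[R]_(n t),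
      (forall t, X t (x0 t)) /\ Amul A x0 = b) ->
  (* parameters *)
  0 < rho -> 0 < theta -> 0 < tau_x -> 0 < tau_z ->
  0 < tau_x / 4 - (T%:R - 1) * rho / 2 ->
  0 < tau_z / 4 - 2 * (theta + tau_z) ^+ 2 / rho ->
  (* initial point *)
  (forall t, X t (x 0%N t)) ->
  (* Jacobi scheme, k >= 1 *)
  (forall k : nat, (1 <= k)%N ->
     (* (i) x_t^k: local minimizer of the t-th subproblem over X_t, with value
        not exceeding that of the warm start x_t^{k-1} *)
     (forall t : 'I_T,
        X t (x k t) /\
        (\forall y \near x k t, X t y ->
           subobj f A b rho tau_x (x k.-1) (z k.-1) (lam k.-1) y
           >= subobj f A b rho tau_x (x k.-1) (z k.-1) (lam k.-1) (x k t)) /\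
        subobj f A b rho tau_x (x k.-1) (z k.-1) (lam k.-1) (x k t)
        <= subobj f A b rho tau_x (x k.-1) (z k.-1) (lam k.-1) (x k.-1 t)) /\
     (* (ii) *)
     z k = (tau_z + rho + theta)^-1 *:
             (tau_z *: z k.-1 - rho *: (Amul A (x k) - b) - lam k.-1) /\
     (* (iii) *)
     lam k = lam k.-1 + rho *: (Amul A (x k) + z k - b)) ->
  forall k : nat, (1 <= k)%N ->
    PhiSeq f A b rho theta tau_x tau_z x z lam k
      <= PhiSeq f A b rho theta tau_x tau_z x z lam k.-1 /\
    Phihat X f <= PhiSeq f A b rho theta tau_x tau_z x z lam k.
Proof.
move=> _ X_A1 f_C2 _ _ rho_gt0 theta_gt0 tau_x_gt0 tau_z_gt0 eta_x eta_z _ scheme.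
have x_step k t := ((scheme k.+1 isT).1 t).2.2.
have z_step k := (scheme k.+1 isT).2.1.
have lam_step k := (scheme k.+1 isT).2.2.
move=> k k_ge1; split.
  by case: k k_ge1 => // k _; apply: PhiSeq_nonincreasing.
have sum_f_le :=
  sum_f_le_PhiSeq f rho_gt0 theta_gt0 tau_x_gt0 tau_z_gt0 eta_z z_step lam_step k.
apply: le_trans sum_f_le; apply: Phihat_le => t.
- exact: (X_A1 t).2.
- exact: (f_C2 t).1.
- exact: ((scheme k k_ge1).1 t).1.
Qed.
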